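(* Let $\boldsymbol{m}=(m_1,m_2)\in\mathbb{N}^2$ and $g=\gcd(m_1,m_2)$. (a) $\displaystyle \mathcal{R}^{(\boldsymbol{m})}=\bigcup_{\rho=0}^{2g-1}\boldsymbol{\varrho}^{(\boldsymbol{m})}_{\rho/m_2}\big([0,2\pi)\big)$. (b) $\mathrm{LS}^{(\boldsymbol{m})}=\{\boldsymbol{x}(r,\theta)\in\mathbb{D}:\ T_{m_1}(r)^2=\cos^2(m_2\theta)\in\{0,1\}\}$, where $\boldsymbol{x}(r,\theta)=(r\cos\theta,r\sin\theta)$ with $r\in[0,1]$, $\theta\in\mathbb{R}$.
   Context: $\mathbb{D}=\{x\in\mathbb{R}^2:|x|\le1\}$. $T_n(r)=\cos(n\arccos r)$ is the Chebyshev polynomial of degree $n$, and $H_{m_2}(x_1,x_2)=\sum_{k=0}^{\lfloor m_2/2\rfloor}\binom{m_2}{2k}(-1)^kx_1^{m_2-2k}x_2^{2k}$ (so that $H_{m_2}(\cos\theta,\sin\theta)=\cos(m_2\theta)$). The rhodonea variety is $\mathcal{R}^{(\boldsymbol{m})}=\{x\in\mathbb{D}:\ (x_1^2+x_2^2)^{m_2}T_{m_1}(\sqrt{x_1^2+x_2^2})^2=H_{m_2}(x_1,x_2)^2\}$, equivalently, in polar coordinates, $\{\boldsymbol{x}(r,\theta)\in\mathbb{D}: T_{m_1}(r)^2=\cos^2(m_2\theta)\}$. Rhodonea curve: $\boldsymbol{\varrho}^{(\boldsymbol{m})}_\alpha(t)=\big(\cos(m_2t)\cos(m_1t-\alpha\pi),\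 \cos(m_2t)\sin(m_1t-\alpha\pi)\big)$. Nodal index set $\mathrm{I}^{(\boldsymbol{m})}=\{(i_1,i_2)\in\mathbb{Z}^2:\ 0\le i_1\le m_1,\ -2m_2<i_2\le 2m_2,\ i_2\le0\text{ if }i_1=m_1,\ i_1+i_2\text{ even}\}$; rhodonea nodes $\mathrm{LS}^{(\boldsymbol{m})}=\{(r_{i_1}\cos\theta_{i_2},r_{i_1}\sin\theta_{i_2}):\boldsymbol{i}\in\mathrm{I}^{(\boldsymbol{m})}\}$ with $r_{i_1}=\cos\!\big(\frac{i_1\pi}{2m_1}\big)$, $\theta_{i_2}=\frac{i_2\pi}{2m_2}$. *)

From Stdlib Require Import Reals Lra Lia ZArith Arith.
Open Scope R_scope.

Definition pt := (R * R)%type.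

Definition in_disk (x : pt) : Prop := (fst x)^2 + (snd x)^2 <= 1.

(* Chebyshev polynomial T_n(r) = cos(n arccos r) (used for r in [0,1]) *)
Definition chebT (n : nat) (r : R) : R := cos (INR n * acos r).

Definition Hpoly (m2 : nat) (x1 x2 : R) : R :=
  sum_f_R0 (fun k => C m2 (2 * k) * (-1)^k * x1^(m2 - 2 * k) * x2^(2 * k))
           (Nat.div2 m2).

Definition rhodonea_variety (m1 m2 : nat) (x : pt) : Prop :=
  in_disk x /\
  ((fst x)^2 + (snd x)^2)^m2 * (chebT m1 (sqrt ((fst x)^2 + (snd x)^2)))^2
    = (Hpoly m2 (fst x) (snd x))^2.

Definition rhodonea_curve (m1 m2 : nat) (alpha t : R) : pt :=
  (cos (INR m2 * t) * cos (INR m1 * t - alpha * PI),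
   cos (INR m2 * t) * sin (INR m1 * t - alpha * PI)).

Definition nodal_index (m1 m2 : nat) (i1 i2 : Z) : Prop :=
  (0 <= i1 <= Z.of_nat m1)%Z /\
  (- 2 * Z.of_nat m2 < i2 <= 2 * Z.of_nat m2)%Z /\
  (i1 = Z.of_nat m1 -> (i2 <= 0)%Z) /\
  Z.Even (i1 + i2).

Definition node_r (m1 : nat) (i1 : Z) : R := cos (IZR i1 * PI / (2 * INR m1)).
Definition node_theta (m2 : nat) (i2 : Z) : R := IZR i2 * PI / (2 * INR m2).

Definition rhodonea_nodes (m1 m2 : nat) (x : pt) : Prop :=
  exists i1 i2 : Z, nodal_index m1 m2 i1 i2 /\
    x = (node_r m1 i1 * cos (node_theta m2 i2), node_r m1 i1 * sin (node_theta m2 i2)).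

Definition polar (r theta : R) : pt := (r * cos theta, r * sin theta).

(* The whole argument takes place in polar coordinates x = polar c φ.
   - Trigonometry: shifts by integer multiples of π (half_turns) and the
     characterisation cos²A = cos²B <-> A = ±B (mod π) (cos_sq_eq).
   - A real de Moivre formula (binom_sum_cos) gives H_m(c cos φ, c sin φ) =
     c^m cos(mφ), so the variety equation becomes
     c^(2 m2) T_{m1}(|c|)² = c^(2 m2) cos²(m2 φ) (variety_polar).
   - Part (a).  A curve point is polar (cos(m2 t)) (m1 t - ρπ/m2), which satisfies
     the equation by cos_sq_mul (curve_in_variety).  Conversely a point of the
     variety is polar (cos s) φ with m2 φ = ±m1 s + Kπ (variety_angles); Bézout's
     identity for gcd(m1, m2) absorbs K into a branch index ρ < 2 gcd(m1, m2)
     and a curve parameter t, then reduced modulo 2π (curve_through).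
   - Part (b).  At a node T_{m1}(r) = cos(i1π/2) and m2 θ = i2π/2, and equal
     parity of i1, i2 gives the equation (node_conditions).  Conversely
     cos² ∈ {0, 1} forces both angles to be multiples of π/2 of equal parity,
     and the angle index is reduced modulo 4 m2 (conditions_node). *)

From Stdlib Require Import Reals Lra Lia ZArith Arith.
Open Scope R_scope.

(* A function that is 2π-periodic along natural multiples is periodic along all
   integer multiples; the library only states periodicity for naturals. *)
Lemma Zperiodic_of_nat (f : R -> R) :
  (forall x k, f (x + 2 * INR k * PI) = f x) ->
  forall x n, f (x + 2 * IZR n * PI) = f x.
Proof.
  intros Hf x n.
  destruct (Z.le_ge_cases 0 n) as [Hn|Hn].
  - destruct (Z_of_nat_complete _ Hn) as [k ->]. rewrite <- INR_IZR_INZ. apply Hf.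
  - destruct (Z_of_nat_complete (- n) ltac:(lia)) as [k Hk].
    rewrite <- (Hf (x + 2 * IZR n * PI) k), INR_IZR_INZ, <- Hk, opp_IZR.
    f_equal. ring.
Qed.

Lemma cos_Zperiod x n : cos (x + 2 * IZR n * PI) = cos x.
Proof. exact (Zperiodic_of_nat cos cos_period x n). Qed.

Lemma sin_Zperiod x n : sin (x + 2 * IZR n * PI) = sin x.
Proof. exact (Zperiodic_of_nat sin sin_period x n). Qed.

Lemma half_turns (j : Z) : exists e, e * e = 1 /\ forall x,
  cos (x + IZR j * PI) = e * cos x /\ sin (x + IZR j * PI) = e * sin x.
Proof.
  destruct (Z.Even_or_Odd j) as [[q ->]|[q ->]].
  - exists 1. split; [ring|]. intro x.
    rewrite mult_IZR, cos_Zperiod, sin_Zperiod. split; ring.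
  - exists (-1). split; [ring|]. intro x.
    replace (x + IZR (2 * q + 1) * PI) with ((x + PI) + 2 * IZR q * PI)
      by (rewrite plus_IZR, mult_IZR; ring).
    rewrite cos_Zperiod, sin_Zperiod, neg_cos, neg_sin. split; ring.
Qed.

Lemma cos_sq_half_turns x j : cos (x + IZR j * PI) ^ 2 = cos x ^ 2.
Proof.
  destruct (half_turns j) as [e [He Hx]]. rewrite (proj1 (Hx x)).
  replace ((e * cos x) ^ 2) with (e * e * cos x ^ 2) by ring. rewrite He. ring.
Qed.

Lemma cos_sq_diff A B : cos A ^ 2 - cos B ^ 2 = sin (A + B) * sin (B - A).
Proof.
  rewrite sin_plus, sin_minus.
  pose proof (sin2_cos2 A) as HA. pose proof (sin2_cos2 B) as HB.
  unfold Rsqr in *. nra.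
Qed.

Lemma cos_sq_eq A B : cos A ^ 2 = cos B ^ 2 ->
  exists k : Z, A = B + IZR k * PI \/ A = - B + IZR k * PI.
Proof.
  intro H. assert (H0 : sin (A + B) * sin (B - A) = 0) by (rewrite <- cos_sq_diff; lra).
  destruct (Rmult_integral _ _ H0) as [H1|H1]; destruct (sin_eq_0_0 _ H1) as [k Hk].
  - exists k. right. lra.
  - exists (- k)%Z. left. rewrite opp_IZR. lra.
Qed.

Lemma cos_sq_mul n A B : cos A ^ 2 = cos B ^ 2 -> cos (INR n * A) ^ 2 = cos (INR n * B) ^ 2.
Proof.
  intro H. destruct (cos_sq_eq _ _ H) as [k [-> | ->]].
  - replace (INR n * (B + IZR k * PI)) with (INR n * B + IZR (Z.of_nat n * k) * PI)
      by (rewrite mult_IZR, <- INR_IZR_INZ; ring).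
    apply cos_sq_half_turns.
  - replace (INR n * (- B + IZR k * PI)) with (- (INR n * B) + IZR (Z.of_nat n * k) * PI)
      by (rewrite mult_IZR, <- INR_IZR_INZ; ring).
    rewrite cos_sq_half_turns, cos_neg. reflexivity.
Qed.

Definition binom_sum (m : nat) (a : R) (u : nat -> R) : R :=
  sum_f_R0 (fun j => C m j * a ^ (m - j) * u j) m.

Lemma C_n0 n : C n 0 = 1.
Proof. unfold C. rewrite Nat.sub_0_r. simpl. field. apply INR_fact_neq_0. Qed.

Lemma C_nn n : C n n = 1.
Proof. unfold C. rewrite Nat.sub_diag. simpl. field. apply INR_fact_neq_0. Qed.

Lemma binom_sum_ext m a u v : (forall j, u j = v j) -> binom_sum m a u = binom_sum m a v.
Proof. intros H. unfold binom_sum. apply sum_eq. intros. rewrite H. ring. Qed.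

Lemma binom_sum_scal m a u b : binom_sum m a (fun j => b * u j) = b * binom_sum m a u.
Proof. unfold binom_sum. rewrite scal_sum. apply sum_eq. intros; ring. Qed.

(* Pascal's rule for binomial convolutions: the step (a + S)^(m+1) = (a + S)(a + S)^m,
   where S shifts the sequence. *)
Lemma binom_sum_succ m a u :
  binom_sum (S m) a u = a * binom_sum m a u + binom_sum m a (fun j => u (S j)).
Proof.
  destruct m as [|p].
  { unfold binom_sum. simpl. rewrite !C_n0, C_nn. ring. }
  unfold binom_sum.
  rewrite decomp_sum, (decomp_sum (fun j => C (S p) j * a ^ (S p - j) * u j)) by lia.
  simpl Nat.pred. rewrite !tech5.
  rewrite (sum_eq (fun i => C (S (S p)) (S i) * a ^ (S (S p) - S i) * u (S i))
             (fun i => C (S p) i * a ^ (S p - i) * u (S i)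
                       + (C (S p) (S i) * a ^ (S p - S i) * u (S i)) * a)).
  2:{ intros i Hi. rewrite <- pascal by lia.
      replace (S (S p) - S i)%nat with (S (S p - S i)) by lia.
      replace (S p - i)%nat with (S (S p - S i)) by lia.
      rewrite <- tech_pow_Rmult. ring. }
  rewrite plus_sum, <- scal_sum.
  rewrite !C_n0, !C_nn, !Nat.sub_diag, !Nat.sub_0_r. simpl. ring.
Qed.

(* De Moivre's formula in real form:
   cos(mφ + ψ) = Σ_j C(m,j) cos^(m-j) φ · sin^j φ · cos(jπ/2 + ψ). *)
Lemma binom_sum_cos m phi psi :
  binom_sum m (cos phi) (fun j => sin phi ^ j * cos (INR j * PI / 2 + psi))
  = cos (INR m * phi + psi).
Proof.
  revert psi. induction m as [|m IH]; intro psi.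
  - unfold binom_sum. simpl. rewrite C_n0.
    replace (0 * PI / 2 + psi) with psi by field. replace (0 * phi + psi) with psi by ring. ring.
  - rewrite binom_sum_succ, IH.
    rewrite (binom_sum_ext _ _ _
      (fun j => sin phi * (sin phi ^ j * cos (INR j * PI / 2 + (psi + PI / 2))))).
    2:{ intro j. rewrite S_INR. simpl pow.
        replace ((INR j + 1) * PI / 2 + psi) with (INR j * PI / 2 + (psi + PI / 2)) by field.
        ring. }
    rewrite binom_sum_scal, IH, S_INR.
    replace (INR m * phi + (psi + PI / 2)) with ((INR m * phi + psi) + PI / 2) by ring.
    replace ((INR m + 1) * phi + psi) with (phi + (INR m * phi + psi)) by ring.
    rewrite (cos_plus _ (PI / 2)), cos_PI2, sin_PI2, (cos_plus phi). ring.
Qed.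

Lemma sum_even_terms f n : (forall k, f (2 * k + 1)%nat = 0) ->
  sum_f_R0 f n = sum_f_R0 (fun k => f (2 * k)%nat) (Nat.div2 n).
Proof.
  intros Hf.
  assert (Hq : forall q, sum_f_R0 f (2 * q) = sum_f_R0 (fun k => f (2 * k)%nat) q
                      /\ sum_f_R0 f (2 * q + 1) = sum_f_R0 (fun k => f (2 * k)%nat) q).
  { induction q as [|q [IH1 IH2]].
    - pose proof (Hf 0%nat) as Hf1. simpl in Hf1 |- *. rewrite Hf1. split; ring.
    - replace (2 * S q)%nat with (S (2 * q + 1)) by lia.
      replace (S (2 * q + 1) + 1)%nat with (S (S (2 * q + 1))) by lia.
      rewrite !tech5, IH2.
      replace (S (S (2 * q + 1))) with (2 * S q + 1)%nat by lia.
      replace (S (2 * q + 1)) with (2 * S q)%nat by lia.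
      rewrite Hf. split; ring. }
  destruct (Nat.Even_or_Odd n) as [[q ->]|[q ->]].
  - rewrite Nat.div2_double. apply Hq.
  - replace (Nat.div2 (2 * q + 1)) with q by (rewrite Nat.add_1_r, Nat.div2_succ_double; reflexivity).
    apply Hq.
Qed.

(* cos(jπ/2) is (-1)^k for j = 2k and 0 for odd j: only the even terms of the
   de Moivre sum survive, which produces the alternating signs of H_m. *)
Lemma cos_even_half_turns k : cos (INR (2 * k) * PI / 2) = (-1) ^ k.
Proof.
  induction k as [|k IH].
  - simpl. replace (0 * PI / 2) with 0 by field. apply cos_0.
  - replace (INR (2 * S k) * PI / 2) with (INR (2 * k) * PI / 2 + PI)
      by (replace (2 * S k)%nat with (2 * k + 2)%nat by lia; rewrite plus_INR; simpl; field).
    rewrite neg_cos, IH. simpl. ring.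
Qed.

Lemma cos_odd_half_turns k : cos (INR (2 * k + 1) * PI / 2) = 0.
Proof.
  apply cos_eq_0_1. exists (Z.of_nat k). rewrite <- INR_IZR_INZ, plus_INR, mult_INR. simpl. field.
Qed.

Lemma Hpoly_polar m c phi : Hpoly m (c * cos phi) (c * sin phi) = c ^ m * cos (INR m * phi).
Proof.
  replace (INR m * phi) with (INR m * phi + 0) by ring.
  rewrite <- binom_sum_cos. unfold binom_sum. rewrite scal_sum.
  rewrite sum_even_terms.
  2:{ intro k. rewrite Rplus_0_r, cos_odd_half_turns. ring. }
  unfold Hpoly. apply sum_eq. intros i Hi.
  assert (Hle : (2 * i <= m)%nat).
  { pose proof (Nat.div2_odd m). destruct (Nat.odd m); simpl in *; lia. }
  rewrite Rplus_0_r, cos_even_half_turns, !Rpow_mult_distr.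
  replace (c ^ m) with (c ^ (m - 2 * i) * c ^ (2 * i)) by (rewrite <- pow_add; f_equal; lia).
  ring.
Qed.

Lemma polar_sq r theta : fst (polar r theta) ^ 2 + snd (polar r theta) ^ 2 = r ^ 2.
Proof.
  unfold polar; simpl fst; simpl snd.
  pose proof (sin2_cos2 theta) as H. unfold Rsqr in H. nra.
Qed.

Lemma polar_in_disk r theta : in_disk (polar r theta) <-> r ^ 2 <= 1.
Proof. unfold in_disk. rewrite polar_sq. tauto. Qed.

Lemma polar_Zperiod r theta n : polar r (theta + 2 * IZR n * PI) = polar r theta.
Proof. unfold polar. rewrite cos_Zperiod, sin_Zperiod. reflexivity. Qed.

Lemma polar_half_turns s phi j :
  polar (cos (s + IZR j * PI)) (phi - IZR j * PI) = polar (cos s) phi.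
Proof.
  destruct (half_turns j) as [e [_ He]].
  destruct (He s) as [Hs _]. destruct (He (phi - IZR j * PI)) as [Hc Hsn].
  replace (phi - IZR j * PI + IZR j * PI) with phi in Hc, Hsn by ring.
  unfold polar. rewrite Hs, Hc, Hsn. f_equal; ring.
Qed.

Lemma polar_coordinates (x : pt) : exists c phi, 0 <= c /\ x = polar c phi.
Proof.
  destruct x as [x1 x2].
  set (r := sqrt (x1 ^ 2 + x2 ^ 2)).
  assert (Hr2 : r * r = x1 ^ 2 + x2 ^ 2) by (apply sqrt_sqrt; nra).
  assert (Hr0 : 0 <= r) by apply sqrt_pos.
  destruct (Req_dec r 0) as [Hz|Hnz].
  { exists 0, 0. unfold polar. split; [lra|]. f_equal; nra. }
  set (u := x1 / r).
  assert (Hu : x1 = r * u) by (unfold u; field; lra).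
  assert (Hu1 : -1 <= u <= 1).
  { assert (u * u <= 1); [|nra].
    apply (Rmult_le_reg_l (r * r)); [nra|]. rewrite Hu in Hr2. nra. }
  assert (Hc : cos (acos u) = u) by (apply cos_acos; exact Hu1).
  assert (Hs0 : 0 <= sin (acos u)) by (apply sin_ge_0; apply acos_bound).
  assert (Hs2 : (r * sin (acos u)) ^ 2 = x2 ^ 2).
  { pose proof (sin2_cos2 (acos u)) as H. unfold Rsqr in H. rewrite Hc in H.
    rewrite Hu in Hr2. nra. }
  assert (0 <= r * sin (acos u)) by (apply Rmult_le_pos; assumption).
  exists r. unfold polar.
  destruct (Rle_lt_dec 0 x2) as [H2|H2].
  - exists (acos u). rewrite Hc. split; [exact Hr0|]. f_equal; nra.
  - exists (- acos u). rewrite cos_neg, sin_neg, Hc. split; [exact Hr0|]. f_equal; nra.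
Qed.

Lemma variety_polar m1 m2 c phi :
  rhodonea_variety m1 m2 (polar c phi) <->
  c ^ 2 <= 1 /\ (c ^ m2) ^ 2 * chebT m1 (Rabs c) ^ 2 = (c ^ m2) ^ 2 * cos (INR m2 * phi) ^ 2.
Proof.
  unfold rhodonea_variety. rewrite polar_in_disk, polar_sq.
  unfold polar; simpl fst; simpl snd. rewrite Hpoly_polar.
  assert (E1 : sqrt (c ^ 2) = Rabs c) by (rewrite <- sqrt_Rsqr_abs; unfold Rsqr; f_equal; ring).
  assert (E2 : (c ^ 2) ^ m2 = (c ^ m2) ^ 2) by (rewrite <- !pow_mult; f_equal; lia).
  rewrite E1, E2, Rpow_mult_distr. tauto.
Qed.

Lemma curve_polar m1 m2 alpha t :
  rhodonea_curve m1 m2 alpha t = polar (cos (INR m2 * t)) (INR m1 * t - alpha * PI).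
Proof. reflexivity. Qed.

Lemma curve_periodic m1 m2 alpha t p :
  rhodonea_curve m1 m2 alpha (t + 2 * IZR p * PI) = rhodonea_curve m1 m2 alpha t.
Proof.
  rewrite !curve_polar.
  replace (INR m2 * (t + 2 * IZR p * PI)) with (INR m2 * t + 2 * IZR (Z.of_nat m2 * p) * PI)
    by (rewrite mult_IZR, <- INR_IZR_INZ; ring).
  replace (INR m1 * (t + 2 * IZR p * PI) - alpha * PI)
    with ((INR m1 * t - alpha * PI) + 2 * IZR (Z.of_nat m1 * p) * PI)
    by (rewrite mult_IZR, <- INR_IZR_INZ; ring).
  rewrite cos_Zperiod, polar_Zperiod. reflexivity.
Qed.

Lemma shift_into_period t : exists p : Z, 0 <= t + 2 * IZR p * PI < 2 * PI.
Proof.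
  pose proof PI_RGT_0 as HPI.
  set (y := t / (2 * PI)).
  destruct (archimed y) as [H1 H2].
  exists (1 - up y)%Z. rewrite minus_IZR.
  replace (t + 2 * (1 - IZR (up y)) * PI) with (2 * PI * (y - IZR (up y) + 1))
    by (unfold y; field; lra).
  split; nra.
Qed.

Lemma curve_in_variety m1 m2 (Hm2 : (1 <= m2)%nat) (rho : nat) t :
  rhodonea_variety m1 m2 (rhodonea_curve m1 m2 (INR rho / INR m2) t).
Proof.
  assert (Hm2R : INR m2 <> 0) by (apply not_0_INR; lia).
  rewrite curve_polar, variety_polar.
  pose proof (COS_bound (INR m2 * t)) as Hb.
  split; [nra|]. f_equal. unfold chebT.
  assert (Hw : cos (acos (Rabs (cos (INR m2 * t)))) ^ 2 = cos (INR m2 * t) ^ 2).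
  { pose proof (pow2_abs (cos (INR m2 * t))) as Habs.
    pose proof (Rabs_pos (cos (INR m2 * t))).
    rewrite cos_acos by nra. exact Habs. }
  rewrite (cos_sq_mul m1 _ _ Hw).
  replace (INR m2 * (INR m1 * t - INR rho / INR m2 * PI))
    with (INR m1 * (INR m2 * t) + IZR (- Z.of_nat rho) * PI)
    by (rewrite opp_IZR, <- INR_IZR_INZ; field; exact Hm2R).
  symmetry. apply cos_sq_half_turns.
Qed.

(* Every point of the variety is a polar point c(cos φ, sin φ) whose radius
   c = cos s satisfies cos²(m1 s) = cos²(m2 φ); at the origin the angle is free
   and can be chosen to satisfy the equation. *)
Lemma variety_angles m1 m2 (Hm2 : (1 <= m2)%nat) (x : pt) :
  rhodonea_variety m1 m2 x ->
  exists s phi, x = polar (cos s) phi /\ cos (INR m1 * s) ^ 2 = cos (INR m2 * phi) ^ 2.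
Proof.
  assert (Hm2R : INR m2 <> 0) by (apply not_0_INR; lia).
  intro Hv. destruct (polar_coordinates x) as [c [phi [Hc ->]]].
  apply variety_polar in Hv as [Hc1 Heq].
  destruct (Req_dec c 0) as [-> | Hnz].
  - exists (PI / 2), (INR m1 * (PI / 2) / INR m2). split.
    + rewrite cos_PI2. unfold polar. f_equal; ring.
    + do 2 f_equal. field. exact Hm2R.
  - exists (acos c), phi. rewrite cos_acos by nra. split; [reflexivity|].
    rewrite Rabs_right in Heq by lra.
    apply Rmult_eq_reg_l in Heq; [exact Heq|].
    apply pow_nonzero, pow_nonzero. exact Hnz.
Qed.

(* Bézout for g = gcd(m1, m2): for every K the number ρ + K lies in the lattice
   (m1 + m2)Z + 2 m2 Z for some branch index 0 <= ρ < 2g (namely ρ ≡ -K mod 2g). *)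
Lemma branch_index m1 m2 (Hm1 : (1 <= m1)%nat) (K : Z) :
  exists rho : nat, (rho < 2 * Nat.gcd m1 m2)%nat /\
  exists j n : Z, ((Z.of_nat m1 + Z.of_nat m2) * j - 2 * Z.of_nat m2 * n = Z.of_nat rho + K)%Z.
Proof.
  destruct (Nat.gcd_bezout_pos m1 m2 ltac:(lia)) as [a [b Hab]].
  set (g := Nat.gcd m1 m2) in *.
  assert (Hg : g <> 0%nat) by (intro E; apply Nat.gcd_eq_0 in E; lia).
  set (G := (2 * Z.of_nat g)%Z).
  pose proof (Z.div_mod (- K) G ltac:(lia)) as Hdm.
  pose proof (Z.mod_pos_bound (- K) G ltac:(lia)) as Hmod.
  exists (Z.to_nat ((- K) mod G)). split; [lia|].
  exists (- 2 * Z.of_nat a * (- K / G))%Z, (- (Z.of_nat a + Z.of_nat b) * (- K / G))%Z.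
  rewrite Z2Nat.id by lia. unfold G in *. nia.
Qed.

Lemma curve_through_branch m1 m2 (Hm1 : (1 <= m1)%nat) (Hm2 : (1 <= m2)%nat) s phi (K : Z) :
  INR m2 * phi = INR m1 * s + IZR K * PI ->
  exists rho : nat, (rho < 2 * Nat.gcd m1 m2)%nat /\
    exists t : R, 0 <= t < 2 * PI /\
      polar (cos s) phi = rhodonea_curve m1 m2 (INR rho / INR m2) t.
Proof.
  intro Hphi.
  assert (Hm2R : INR m2 <> 0) by (apply not_0_INR; lia).
  destruct (branch_index m1 m2 Hm1 K) as [rho [Hrho [j [n Hjn]]]].
  exists rho. split; [exact Hrho|].
  set (t0 := (s + IZR j * PI) / INR m2).
  assert (Ht0 : INR m2 * t0 = s + IZR j * PI) by (unfold t0; field; exact Hm2R).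
  assert (Hangle : INR m1 * t0 - INR rho / INR m2 * PI = (phi - IZR j * PI) + 2 * IZR n * PI).
  { apply (Rmult_eq_reg_l (INR m2)); [|exact Hm2R].
    replace (INR m2 * (INR m1 * t0 - INR rho / INR m2 * PI))
      with (INR m1 * (INR m2 * t0) - INR rho * PI) by (field; exact Hm2R).
    apply (f_equal IZR) in Hjn.
    rewrite minus_IZR, !mult_IZR, !plus_IZR, <- !INR_IZR_INZ in Hjn.
    assert (E : ((INR m1 + INR m2) * IZR j - 2 * INR m2 * IZR n) * PI = (INR rho + IZR K) * PI)
      by (rewrite Hjn; reflexivity).
    rewrite Ht0. lra. }
  destruct (shift_into_period t0) as [p Hp].
  exists (t0 + 2 * IZR p * PI). split; [exact Hp|].
  rewrite curve_periodic, curve_polar, Ht0, Hangle, polar_Zperiod, polar_half_turns.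
  reflexivity.
Qed.

(* Both sign branches m2 φ = ±m1 s + Kπ reduce to curve_through_branch (s ↦ -s). *)
Lemma curve_through m1 m2 (Hm1 : (1 <= m1)%nat) (Hm2 : (1 <= m2)%nat) s phi :
  cos (INR m1 * s) ^ 2 = cos (INR m2 * phi) ^ 2 ->
  exists rho : nat, (rho < 2 * Nat.gcd m1 m2)%nat /\
    exists t : R, 0 <= t < 2 * PI /\
      polar (cos s) phi = rhodonea_curve m1 m2 (INR rho / INR m2) t.
Proof.
  intro Heq. symmetry in Heq. destruct (cos_sq_eq _ _ Heq) as [K [HK|HK]].
  - exact (curve_through_branch m1 m2 Hm1 Hm2 s phi K HK).
  - rewrite <- cos_neg. apply (curve_through_branch m1 m2 Hm1 Hm2 (- s) phi K). lra.
Qed.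

Lemma cos_sq_half_pi_parity (i1 i2 : Z) :
  Z.Even (i1 + i2) -> cos (IZR i1 * PI / 2) ^ 2 = cos (IZR i2 * PI / 2) ^ 2.
Proof.
  intros [e He].
  replace (IZR i1 * PI / 2) with (- (IZR i2 * PI / 2) + IZR e * PI).
  - rewrite cos_sq_half_turns, cos_neg. reflexivity.
  - replace i1 with (2 * e - i2)%Z by lia. rewrite minus_IZR, mult_IZR. field.
Qed.

Lemma cos_sq_half_pi_values (i : Z) :
  cos (IZR i * PI / 2) ^ 2 = 0 \/ cos (IZR i * PI / 2) ^ 2 = 1.
Proof.
  destruct (Z.Even_or_Odd i) as [[q ->]|[q ->]].
  - right. pose proof (sin2_cos2 (IZR (2 * q) * PI / 2)) as H. unfold Rsqr in H.
    rewrite (sin_eq_0_1 (IZR (2 * q) * PI / 2)) in H by (exists q; rewrite mult_IZR; field).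
    nra.
  - left. rewrite (cos_eq_0_1 (IZR (2 * q + 1) * PI / 2)); [ring|].
    exists q. rewrite plus_IZR, mult_IZR. field.
Qed.

Lemma half_pi_multiples u v :
  cos u ^ 2 = cos v ^ 2 -> cos v ^ 2 = 0 \/ cos v ^ 2 = 1 ->
  exists i1 i2 : Z, u = IZR i1 * PI / 2 /\ v = IZR i2 * PI / 2 /\ Z.Even (i1 + i2).
Proof.
  intros Heq [Hv|Hv].
  - assert (Hu0 : cos u = 0) by nra. assert (Hv0 : cos v = 0) by nra.
    destruct (cos_eq_0_0 _ Hu0) as [k1 ->]. destruct (cos_eq_0_0 _ Hv0) as [k2 ->].
    exists (2 * k1 + 1)%Z, (2 * k2 + 1)%Z.
    rewrite !plus_IZR, !mult_IZR. split; [field|]. split; [field|].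
    exists (k1 + k2 + 1)%Z. lia.
  - pose proof (sin2_cos2 u) as Hu. pose proof (sin2_cos2 v) as Hv'. unfold Rsqr in Hu, Hv'.
    assert (Hu0 : sin u = 0) by nra. assert (Hv0 : sin v = 0) by nra.
    destruct (sin_eq_0_0 _ Hu0) as [k1 ->]. destruct (sin_eq_0_0 _ Hv0) as [k2 ->].
    exists (2 * k1)%Z, (2 * k2)%Z.
    rewrite !mult_IZR. split; [field|]. split; [field|].
    exists (k1 + k2)%Z. lia.
Qed.

Lemma node_conditions m1 m2 (Hm1 : (1 <= m1)%nat) (Hm2 : (1 <= m2)%nat) (i1 i2 : Z) :
  nodal_index m1 m2 i1 i2 ->
  0 <= node_r m1 i1 <= 1 /\
  chebT m1 (node_r m1 i1) ^ 2 = cos (INR m2 * node_theta m2 i2) ^ 2 /\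
  (cos (INR m2 * node_theta m2 i2) ^ 2 = 0 \/ cos (INR m2 * node_theta m2 i2) ^ 2 = 1).
Proof.
  intros [Hi1 [_ [_ Hev]]].
  pose proof PI_RGT_0 as HPI.
  assert (Hm1R : 1 <= INR m1) by (apply (le_INR 1); exact Hm1).
  assert (Hm2R : 1 <= INR m2) by (apply (le_INR 1); exact Hm2).
  assert (HA0 : 0 <= IZR i1) by (apply IZR_le; lia).
  assert (HA1 : IZR i1 <= INR m1) by (rewrite INR_IZR_INZ; apply IZR_le; lia).
  set (A := IZR i1 * PI / (2 * INR m1)).
  assert (HA : 0 <= A <= PI / 2).
  { unfold A. split; [apply Rle_mult_inv_pos; nra|].
    apply (Rmult_le_reg_l (2 * INR m1)); [lra|].
    replace (2 * INR m1 * (IZR i1 * PI / (2 * INR m1))) with (IZR i1 * PI) by (field; lra).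
    nra. }
  assert (Hch : chebT m1 (node_r m1 i1) = cos (IZR i1 * PI / 2)).
  { unfold chebT, node_r. fold A. rewrite acos_cos by lra. unfold A. f_equal. field. lra. }
  assert (Hth : INR m2 * node_theta m2 i2 = IZR i2 * PI / 2)
    by (unfold node_theta; field; lra).
  rewrite Hch, Hth. split; [|split].
  - unfold node_r. fold A. split; [apply cos_ge_0; lra | apply COS_bound].
  - apply cos_sq_half_pi_parity. exact Hev.
  - apply cos_sq_half_pi_values.
Qed.

Lemma angle_index_reduce m2 (Hm2 : (1 <= m2)%nat) (i : Z) :
  exists i' q : Z, (- 2 * Z.of_nat m2 < i' <= 2 * Z.of_nat m2)%Z /\
                   i = (i' + 4 * Z.of_nat m2 * q)%Z.
Proof.
  set (N := (4 * Z.of_nat m2)%Z).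
  pose proof (Z.div_mod (i + 2 * Z.of_nat m2 - 1) N ltac:(lia)) as Hdm.
  pose proof (Z.mod_pos_bound (i + 2 * Z.of_nat m2 - 1) N ltac:(lia)) as Hmod.
  exists (i - N * ((i + 2 * Z.of_nat m2 - 1) / N))%Z, ((i + 2 * Z.of_nat m2 - 1) / N)%Z.
  unfold N in *. lia.
Qed.

Lemma node_theta_shift m2 (Hm2 : (1 <= m2)%nat) (i q : Z) :
  node_theta m2 (i + 4 * Z.of_nat m2 * q) = node_theta m2 i + 2 * IZR q * PI.
Proof.
  assert (Hm2R : INR m2 <> 0) by (apply not_0_INR; lia).
  unfold node_theta. rewrite plus_IZR, !mult_IZR, <- INR_IZR_INZ. field. exact Hm2R.
Qed.

(* The index i1 = m1 gives the origin, where the angle index is irrelevant. *)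
Lemma node_r_last m1 (Hm1 : (1 <= m1)%nat) : node_r m1 (Z.of_nat m1) = 0.
Proof.
  assert (Hm1R : INR m1 <> 0) by (apply not_0_INR; lia).
  unfold node_r. rewrite <- INR_IZR_INZ.
  replace (INR m1 * PI / (2 * INR m1)) with (PI / 2) by (field; exact Hm1R).
  apply cos_PI2.
Qed.

(* Any radius index 0 <= i1 <= m1 and angle index i2 of the same parity give a
   rhodonea node (after reducing i2 modulo 4 m2 and, at the origin, into (-2 m2, 0]). *)
Lemma nodes_of_indices m1 m2 (Hm1 : (1 <= m1)%nat) (Hm2 : (1 <= m2)%nat) (i1 i2 : Z) :
  (0 <= i1 <= Z.of_nat m1)%Z -> Z.Even (i1 + i2) ->
  rhodonea_nodes m1 m2 (polar (node_r m1 i1) (node_theta m2 i2)).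
Proof.
  intros Hi1 [e He].
  destruct (angle_index_reduce m2 Hm2 i2) as [i [q [Hi ->]]].
  rewrite node_theta_shift, polar_Zperiod by exact Hm2.
  destruct (Z.eq_dec i1 (Z.of_nat m1)) as [->|Hne]; [destruct (Z_le_gt_dec i 0) as [Hle|Hgt]|].
  - exists (Z.of_nat m1), i. split; [|reflexivity].
    repeat split; try lia. exists (e - 2 * Z.of_nat m2 * q)%Z. lia.
  - exists (Z.of_nat m1), (i - 2 * Z.of_nat m2)%Z. split.
    + repeat split; try lia. exists (e - 2 * Z.of_nat m2 * q - Z.of_nat m2)%Z. lia.
    + unfold polar. rewrite node_r_last by exact Hm1. f_equal; ring.
  - exists i1, i. split; [|reflexivity].
    repeat split; try lia. exists (e - 2 * Z.of_nat m2 * q)%Z. lia.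
Qed.

(* The polar conditions of part (b) characterise the nodes: acos r and θ are
   multiples of π/(2 m1) and π/(2 m2) with indices of equal parity. *)
Lemma conditions_node m1 m2 (Hm1 : (1 <= m1)%nat) (Hm2 : (1 <= m2)%nat) r theta :
  0 <= r <= 1 -> chebT m1 r ^ 2 = cos (INR m2 * theta) ^ 2 ->
  (cos (INR m2 * theta) ^ 2 = 0 \/ cos (INR m2 * theta) ^ 2 = 1) ->
  rhodonea_nodes m1 m2 (polar r theta).
Proof.
  intros Hr Heq Hv.
  pose proof PI_RGT_0 as HPI.
  assert (Hm1R : 1 <= INR m1) by (apply (le_INR 1); exact Hm1).
  assert (Hm2R : 1 <= INR m2) by (apply (le_INR 1); exact Hm2).
  unfold chebT in Heq. set (s := acos r) in Heq.
  assert (Hcs : cos s = r) by (apply cos_acos; lra).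
  assert (Hs : 0 <= s <= PI / 2).
  { pose proof (acos_bound r) as Hb. fold s in Hb. split; [lra|].
    destruct (Rle_lt_dec s (PI / 2)) as [H|H]; [exact H|].
    assert (cos s < 0) by (apply cos_lt_0; lra). lra. }
  destruct (half_pi_multiples _ _ Heq Hv) as [i1 [i2 [H1 [H2 Hev]]]].
  assert (Hi1 : (0 <= i1 <= Z.of_nat m1)%Z).
  { assert (Hi : 0 <= IZR i1 * PI <= INR m1 * PI).
    { replace (IZR i1 * PI) with (2 * (INR m1 * s)) by (rewrite H1; field). nra. }
    split; apply le_IZR; [|rewrite <- INR_IZR_INZ]; apply (Rmult_le_reg_r PI); lra. }
  replace r with (node_r m1 i1).
  2:{ rewrite <- Hcs. unfold node_r. f_equal.
      apply (Rmult_eq_reg_l (INR m1)); [rewrite H1; field|]; lra. }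
  replace theta with (node_theta m2 i2).
  2:{ unfold node_theta. apply (Rmult_eq_reg_l (INR m2)); [rewrite H2; field|]; lra. }
  apply nodes_of_indices; assumption.
Qed.

Theorem theorem4p1 (m1 m2 : nat) (Hm1 : (1 <= m1)%nat) (Hm2 : (1 <= m2)%nat) :
  (* (a) *)
  (forall x : pt,
     rhodonea_variety m1 m2 x <->
     exists rho : nat, (rho < 2 * Nat.gcd m1 m2)%nat /\
       exists t : R, 0 <= t < 2 * PI /\
         x = rhodonea_curve m1 m2 (INR rho / INR m2) t)
  /\
  (* (b) *)
  (forall x : pt,
     rhodonea_nodes m1 m2 x <->
     exists r theta : R, 0 <= r <= 1 /\ x = polar r theta /\ in_disk x /\
       (chebT m1 r)^2 = (cos (INR m2 * theta))^2 /\
       ((cos (INR m2 * theta))^2 = 0 \/ (cos (INR m2 * theta))^2 = 1)).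
Proof.
  split; intro x; split.
  - intro Hv. destruct (variety_angles m1 m2 Hm2 x Hv) as [s [phi [-> Heq]]].
    exact (curve_through m1 m2 Hm1 Hm2 s phi Heq).
  - intros [rho [_ [t [_ ->]]]]. exact (curve_in_variety m1 m2 Hm2 rho t).
  - intros [i1 [i2 [Hidx ->]]].
    destruct (node_conditions m1 m2 Hm1 Hm2 i1 i2 Hidx) as [Hr [Heq Hv]].
    exists (node_r m1 i1), (node_theta m2 i2).
    split; [exact Hr|]. split; [reflexivity|].
    split; [apply polar_in_disk; nra | split; assumption].
  - intros [r [theta [Hr [-> [_ [Heq Hv]]]]]].
    exact (conditions_node m1 m2 Hm1 Hm2 r theta Hr Heq Hv).
Qed.
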